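(* Let $G$ be a finite multigraph (no loops), let $\ell \geq 4$ be an integer, let $s$ be a vertex of $G$, and let $A \subsetneq V(G)$ with $s \notin A$ be such that $\lambda_G(x,y) \geq \ell$ for any two distinct $x,y\in A$ and such that no edge of $G$ has both endvertices outside $A$. Assume $\deg(s) \geq 4$, let $I_1$ and $I_2$ be two distinct maximal independent sets in $L(G,s,\tau_A)$, each of size at least $2$, and let $D_1, D_2$ be dangerous sets such that for $i=1,2$ and every edge $sv \in I_i$ we have $v \in D_i$. Then: (1) $|I_1 \cap I_2| \leq 1$; (2) if $|I_1 \cap I_2| = 1$ and $I_1 \cup I_2 \neq V(L(G,s,\tau_A))$, then $\ell$ is odd.
   Context: $\lambda_G(x,y)$ is the maximum number of pairwise edge-disjoint $x$–$y$ paths in $G$; $\delta_G(X)$ is the set of edges with exactly one endvertex in $X$. Lifting two distinct edges $sx,sy$ means deleting them and adding a new edge $xy$. The target function $\tau_A$ assigns $\ell$ to pairs of vertices both in $A$ and $0$ otherwise; a pair of edges at $s$ is $\tau_A$-admissible if after lifting them the new graph $G'$ satisfies $\lambda_{G'}(x,y)\ge\tau_A(x,y)$ for all distinct $x,y\in V(G)\setminus\{s\}$. The lifting graph $L(G,s,\tau_A)$ has as vertices the edges incident with $s$, two being adjacent iff they form a $\tau_A$-admissible pair. A set $D\subseteq V(G)\setminus\{s\}$ is dangerous if both $D$ and $V(G)\setminus(D\cup\{s\})$ contain vertices of $A$ and $|\delta_G(D)|\le \ell+1$. *)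

From mathcomp Require Import all_boot.
Set Implicit Arguments. Unset Strict Implicit. Unset Printing Implicit Defensive.

(* A finite multigraph on the finite vertex type V is an edge list
   G : seq (V * V); the edges are the indices i : 'I_(size G), and edge i
   joins (edge G i).1 and (edge G i).2.  Parallel edges are distinct
   list entries. The vertex set of the graph is all of V. *)

Section Graphs.
Variable V : finType.
Implicit Types (G : seq (V * V)) (x y s : V).

Definition edge G (i : 'I_(size G)) : V * V := tnth (in_tuple G) i.

Definition loopless G := all (fun e : V * V => e.1 != e.2) G.

Definition joins (e : V * V) u v :=
  ((e.1 == u) && (e.2 == v)) || ((e.1 == v) && (e.2 == u)).

(* es is an x-y path: there are pairwise distinct vertices
   x = v_0, v_1, ..., v_m = y (vs = [v_1; ...; v_m]) such that the k-th
   edge of es joins v_k and v_(k+1). *)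
Definition is_path G x y (es : seq 'I_(size G)) : Prop :=
  exists vs : seq V,
    [/\ size vs = size es, last x vs = y, uniq (x :: vs) &
        all (fun t => joins (edge t.1) t.2.1 t.2.2) (zip es (zip (x :: vs) vs))].

Definition lambda_ge G x y (k : nat) : Prop :=
  exists ps : seq (seq 'I_(size G)),
    [/\ size ps = k,
        forall p, p \in ps -> is_path x y p &
        forall i j, i < j < k ->
          forall e, e \in nth [::] ps i -> e \notin nth [::] ps j].

Definition tau (A : {set V}) (l : nat) x y : nat :=
  if (x \in A) && (y \in A) then l else 0.

Definition incident s (e : V * V) := (e.1 == s) || (e.2 == s).

Definition other s (e : V * V) : V := if e.1 == s then e.2 else e.1.

Definition lift G s (i j : 'I_(size G)) : seq (V * V) :=
  [seq edge k | k <- enum 'I_(size G) & (k != i) && (k != j)]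
    ++ [:: (other s (edge i), other s (edge j))].

Definition admissible G s (A : {set V}) (l : nat) (i j : 'I_(size G)) : Prop :=
  [/\ i != j, incident s (edge i), incident s (edge j) &
      forall x y, x != y -> x != s -> y != s ->
        lambda_ge (lift s i j) x y (tau A l x y)].

Definition Lverts G s : {set 'I_(size G)} := [set i | incident s (edge i)].

Definition independent_L G s A l (I : {set 'I_(size G)}) : Prop :=
  I \subset Lverts G s /\
  forall i j, i \in I -> j \in I -> ~ admissible s A l i j.

Definition maximal_independent_L G s A l (I : {set 'I_(size G)}) : Prop :=
  independent_L s A l I /\
  forall J, independent_L s A l J -> I \subset J -> J = I.

Definition deg G x := #|[set i : 'I_(size G) | incident x (edge i)]|.

Definition delta G (D : {set V}) : {set 'I_(size G)} :=
  [set i | ((edge i).1 \in D) (+) ((edge i).2 \in D)].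

Definition dangerous G s (A : {set V}) (l : nat) (D : {set V}) : Prop :=
  [/\ s \notin D, [exists v, (v \in D) && (v \in A)],
      [exists v, [&& v \notin D, v != s & v \in A]] &
      #|delta G D| <= l.+1].

End Graphs.

From Pilot Require Import Defs.
From mathcomp Require Import all_boot zify.
Set Implicit Arguments. Unset Strict Implicit. Unset Printing Implicit Defensive.

(* Two s-edges ending in a dangerous set D are never an admissible pair: lifting them cuts
   delta(D) down to at most l - 1 edges although D separates two vertices of A.  Hence a maximal
   independent set whose edges all end in D contains every s-edge ending in D.  For I1 != I2
   this yields s-edges ending in D1 \ D2 and in D2 \ D1, so both sets have cuts of size >= l,
   and posimodularity
     d(D1) + d(D2) = d(D1 \ D2) + d(D2 \ D1) + 2 d(D1 ∩ D2, V - (D1 ∪ D2))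
   with d(Di) <= l + 1 bounds the common edges, which all join s to D1 ∩ D2, by one.  If there
   is one common edge and an s-edge outside I1 ∪ I2, then d(D1 ∩ D2) >= l and D1 ∪ D2 is not
   dangerous, so d(D1 ∪ D2) >= l + 2; submodularity makes every bound tight, and then
     d(D1 ∩ D2) + d(D1 \ D2) = d(D1) + 2 d(D1 ∩ D2, D1 \ D2)
   reads l + l = l + 1 (mod 2). *)

Section Cuts.
Variable V : finType.
Implicit Types (H : seq (V * V)) (D P Q : {set V}).

Definition cross D (e : V * V) := (e.1 \in D) (+) (e.2 \in D).

Definition between P Q (e : V * V) :=
  ((e.1 \in P) && (e.2 \in Q)) || ((e.2 \in P) && (e.1 \in Q)).

Definition n_between H P Q := count (between P Q) H.

Lemma card_set_count (T : finType) (p : pred T) : #|[set x | p x]| = count p (enum T).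
Proof.
rewrite cardsE cardE size_filter /enum_mem count_filter.
by apply: eq_count => x; rewrite /= andbT.
Qed.

Lemma card_edges H (p : pred (V * V)) :
  #|[set k : 'I_(size H) | p (edge k)]| = count p H.
Proof.
have /= enumH := map_tnth_enum (in_tuple H).
by rewrite -[in RHS]enumH count_map card_set_count.
Qed.

Lemma card_delta H D : #|delta H D| = count (cross D) H.
Proof. exact: card_edges. Qed.

Lemma is_path_delta H D x y es :
  @is_path _ H x y es -> x \in D -> y \notin D -> exists2 e, e \in es & e \in delta H D.
Proof.
case=> vs [+ <- _]; elim: es vs x => [|e es IH] [|v vs] x //=; first by move=> _ _ ->.
case=> size_vs /andP[joins_e walk] xD lastD.
case vD: (v \in D).
  by have [e' e'es e'D] := IH vs v size_vs walk vD lastD; exists e'; rewrite // inE e'es orbT.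
exists e; first by rewrite inE eqxx.
by rewrite inE; case/orP: joins_e => /andP[/eqP-> /eqP->]; rewrite xD vD.
Qed.

(* Each of the edge-disjoint x-y paths uses its own edge of delta(D). *)
Lemma lambda_ge_delta H D x y k :
  lambda_ge H x y k -> x \in D -> y \notin D -> k <= #|delta H D|.
Proof.
case=> ps [size_ps paths disj] xD yD.
have /fin_all_exists[f f_cut] (i : 'I_k) :
    exists e, (e \in nth [::] ps i) && (e \in delta H D).
  have /paths path_i : nth [::] ps i \in ps by rewrite mem_nth ?size_ps.
  by have [e ? ?] := is_path_delta path_i xD yD; exists e; apply/andP.
have f_inj : injective f.
  move=> i j fij; apply/eqP; apply: contraT => neq_ij.
  have /andP[fi _] := f_cut i; have /andP[fj _] := f_cut j.
  case: (ltngtP i j) => [lt_ij|lt_ji|/val_inj eq_ij]; last by rewrite eq_ij eqxx in neq_ij.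
    by have := disj i j (introT andP (conj lt_ij (ltn_ord j))) _ fi; rewrite fij fj.
  by have := disj j i (introT andP (conj lt_ji (ltn_ord i))) _ fj; rewrite -fij fi.
rewrite -[k]card_ord -(card_imset _ f_inj); apply: subset_leq_card.
by apply/subsetP => _ /imsetP[i _ ->]; case/andP: (f_cut i).
Qed.

Lemma card_delta_lift H s (i j : 'I_(size H)) D :
  i != j -> cross D (edge i) -> cross D (edge j) ->
  ~~ cross D (other s (edge i), other s (edge j)) ->
  #|delta (Defs.lift s i j) D| + 2 = #|delta H D|.
Proof.
move=> neq_ij cross_i cross_j /negbTE cross_new.
rewrite !card_delta /Defs.lift count_cat /= cross_new /= count_map count_filter !addn0.
rewrite -card_set_count -(card_edges H) -[RHS](cardsID [set k | (k != i) && (k != j)]).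
congr (_ + _); first by apply: eq_card => k; rewrite !inE.
have -> : [set k | cross D (edge k)] :\: [set k | (k != i) && (k != j)] = [set i; j].
  apply/setP => k; rewrite !inE.
  case: (eqVneq k i) => [->|_]; first by rewrite cross_i.
  by case: (eqVneq k j) => [->|_]; rewrite ?cross_j.
by rewrite cards2 neq_ij.
Qed.

Lemma card_delta_posimodular H P Q :
  #|delta H P| + #|delta H Q| =
  #|delta H (P :\: Q)| + #|delta H (Q :\: P)| + 2 * n_between H (P :&: Q) (~: (P :|: Q)).
Proof.
rewrite !card_delta /n_between; elim: H => //= e H; rewrite /cross /between !inE.
by case: (e.1 \in P); case: (e.1 \in Q); case: (e.2 \in P); case: (e.2 \in Q) => /=; lia.
Qed.

Lemma card_delta_submodular H P Q :
  #|delta H P| + #|delta H Q| =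
  #|delta H (P :&: Q)| + #|delta H (P :|: Q)| + 2 * n_between H (P :\: Q) (Q :\: P).
Proof.
rewrite !card_delta /n_between; elim: H => //= e H; rewrite /cross /between !inE.
by case: (e.1 \in P); case: (e.1 \in Q); case: (e.2 \in P); case: (e.2 \in Q) => /=; lia.
Qed.

Lemma card_delta_split H P Q :
  #|delta H (P :&: Q)| + #|delta H (P :\: Q)| =
  #|delta H P| + 2 * n_between H (P :&: Q) (P :\: Q).
Proof.
rewrite !card_delta /n_between; elim: H => //= e H; rewrite /cross /between !inE.
by case: (e.1 \in P); case: (e.1 \in Q); case: (e.2 \in P); case: (e.2 \in Q) => /=; lia.
Qed.

Lemma cross_incident s D e : incident s e -> s \notin D -> other s e \in D -> cross D e.
Proof.
case: e => a b; rewrite /incident /other /cross /=.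
case: (eqVneq a s) => [->|_] /=; first by move=> _ /negbTE-> ->.
by move=> /eqP-> /negbTE-> ->.
Qed.

Lemma between_incident s P Q e :
  incident s e -> s \in Q -> other s e \in P -> between P Q e.
Proof.
case: e => a b; rewrite /incident /other /between /=.
case: (eqVneq a s) => [->|_] /=; first by move=> _ -> ->; rewrite orbT.
by move=> /eqP-> -> ->.
Qed.

Lemma other_in s (A : {set V}) e :
  (e.1 \in A) || (e.2 \in A) -> s \notin A -> incident s e -> other s e \in A.
Proof.
case: e => a b; rewrite /incident /other /=.
case: (eqVneq a s) => [->|_] /=; first by case/orP=> // sA /negP.
by case/orP=> // bA sA /eqP eq_bs; rewrite -eq_bs bA in sA.
Qed.

End Cuts.

Section LiftingGraph.
Variables (V : finType) (G : seq (V * V)) (s : V) (A : {set V}) (l : nat).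
Implicit Types (D E : {set V}) (I J : {set 'I_(size G)}).

Definition ends_in I D := forall i, i \in I -> other s (edge i) \in D.

Lemma dangerous_not_admissible D (i j : 'I_(size G)) :
  dangerous G s A l D -> incident s (edge i) -> incident s (edge j) ->
  other s (edge i) \in D -> other s (edge j) \in D -> ~ admissible s A l i j.
Proof.
case=> sD /existsP[a /andP[aD aA]] /existsP[b /and3P[bD bs bA]] small_cut inc_i inc_j iD jD.
case=> neq_ij _ _ lift_lambda.
have neq_ab : a != b by apply: contraNneq bD => <-.
have neq_as : a != s by apply: contraNneq sD => <-.
have := lambda_ge_delta (lift_lambda a b neq_ab neq_as bs) aD bD; rewrite /tau aA bA /=.
have new_inside : ~~ cross D (other s (edge i), other s (edge j)) by rewrite /cross /= iD jD.
rewrite -(card_delta_lift neq_ij (cross_incident inc_i sD iD) (cross_incident inc_j sD jD)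
  new_inside) addn2 ltnS in small_cut.
by move=> /leq_ltn_trans/(_ small_cut); rewrite ltnn.
Qed.

Lemma independent_ends_in D J :
  dangerous G s A l D -> J \subset Lverts G s -> ends_in J D -> independent_L s A l J.
Proof.
move=> dangD /subsetP JL J_D; split; first exact/subsetP.
move=> i j iJ jJ; have := JL i iJ; have := JL j jJ; rewrite !inE => inc_j inc_i.
exact: dangerous_not_admissible dangD inc_i inc_j (J_D i iJ) (J_D j jJ).
Qed.

Lemma maximal_independent_absorbs D I e :
  maximal_independent_L s A l I -> dangerous G s A l D -> ends_in I D ->
  e \in Lverts G s -> other s (edge e) \in D -> e \in I.
Proof.
case=> [[IL _] maxI] dangD I_D eL eD.
suff <- : e |: I = I by rewrite setU11.
apply: maxI (subsetUr _ _); apply: independent_ends_in dangD _ _.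
  by rewrite subUset sub1set eL.
by move=> i; rewrite !inE => /orP[/eqP->|/I_D].
Qed.

Lemma maximal_independent_private D I J :
  maximal_independent_L s A l I -> maximal_independent_L s A l J -> I != J ->
  dangerous G s A l D -> ends_in J D ->
  exists2 e, e \in I & other s (edge e) \notin D.
Proof.
move=> [[IL _] maxI] maxJ neq_IJ dangD J_D.
have /subsetPn[e eI eJ] : ~~ (I \subset J).
  by apply: contra neq_IJ => /(maxI J maxJ.1) ->.
exists e => //; apply: contra eJ.
exact: maximal_independent_absorbs maxJ dangD J_D (subsetP IL e eI).
Qed.

Hypothesis sA : s \notin A.
Hypothesis lambda_A : forall x y, x \in A -> y \in A -> x != y -> lambda_ge G x y l.
Hypothesis edges_meet_A : forall i : 'I_(size G), ((edge i).1 \in A) || ((edge i).2 \in A).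

Lemma other_in_A e : e \in Lverts G s -> other s (edge e) \in A.
Proof. by rewrite inE; apply: other_in. Qed.

Lemma l_le_delta D e f : e \in Lverts G s -> f \in Lverts G s ->
  other s (edge e) \in D -> other s (edge f) \notin D -> l <= #|delta G D|.
Proof.
move=> eL fL eD fD; apply: (lambda_ge_delta _ eD fD).
by apply: lambda_A; rewrite ?other_in_A //; apply: contraNneq fD => <-.
Qed.

Lemma l_le_delta_setD D E I J :
  maximal_independent_L s A l I -> maximal_independent_L s A l J -> I != J ->
  dangerous G s A l D -> dangerous G s A l E -> ends_in I D -> ends_in J E ->
  l <= #|delta G (D :\: E)|.
Proof.
move=> maxI maxJ neq_IJ dangD dangE I_D J_E.
have [e eI eE] := maximal_independent_private maxI maxJ neq_IJ dangE J_E.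
have neq_JI : J != I by rewrite eq_sym.
have [f fJ fD] := maximal_independent_private maxJ maxI neq_JI dangD I_D.
apply: (l_le_delta (subsetP maxI.1.1 e eI) (subsetP maxJ.1.1 f fJ)).
  by rewrite inE eE I_D.
by rewrite inE negb_and fD orbT.
Qed.

Section TwoMaximalIndependentSets.
Variables (I1 I2 : {set 'I_(size G)}) (D1 D2 : {set V}).
Hypotheses (maxI1 : maximal_independent_L s A l I1) (maxI2 : maximal_independent_L s A l I2).
Hypothesis neq_I12 : I1 != I2.
Hypotheses (dangD1 : dangerous G s A l D1) (dangD2 : dangerous G s A l D2).
Hypotheses (I1_D1 : ends_in I1 D1) (I2_D2 : ends_in I2 D2).

Lemma l_le_delta_D1D2 : l <= #|delta G (D1 :\: D2)|.
Proof. exact: l_le_delta_setD maxI1 maxI2 neq_I12 dangD1 dangD2 I1_D1 I2_D2. Qed.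

Lemma l_le_delta_D2D1 : l <= #|delta G (D2 :\: D1)|.
Proof. by apply: l_le_delta_setD maxI2 maxI1 _ dangD2 dangD1 I2_D2 I1_D1; rewrite eq_sym. Qed.

Lemma card_I1I2_le_between : #|I1 :&: I2| <= n_between G (D1 :&: D2) (~: (D1 :|: D2)).
Proof.
rewrite /n_between -card_edges; apply/subset_leq_card/subsetP => k.
rewrite !inE => /andP[kI1 kI2]; have := subsetP maxI1.1.1 k kI1; rewrite inE => inc_k.
apply: between_incident inc_k _ _; last by rewrite inE I1_D1 ?I2_D2.
by case: dangD1 => sD1 _ _ _; case: dangD2 => sD2 _ _ _; rewrite !inE negb_or sD1 sD2.
Qed.

Lemma card_I1I2_le1 : #|I1 :&: I2| <= 1.
Proof.
have [_ _ _ cut1] := dangD1; have [_ _ _ cut2] := dangD2.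
have := card_delta_posimodular G D1 D2.
have := l_le_delta_D1D2; have := l_le_delta_D2D1; have := card_I1I2_le_between.
lia.
Qed.

Lemma l_le_delta_D1ID2 : 0 < #|I1 :&: I2| -> l <= #|delta G (D1 :&: D2)|.
Proof.
case/card_gt0P => e; rewrite inE => /andP[eI1 eI2].
have [f fI1 fD2] := maximal_independent_private maxI1 maxI2 neq_I12 dangD2 I2_D2.
apply: (l_le_delta (subsetP maxI1.1.1 e eI1) (subsetP maxI1.1.1 f fI1)).
  by rewrite inE I1_D1 ?I2_D2.
by rewrite inE negb_and fD2 orbT.
Qed.

(* D1 :|: D2 cannot be dangerous: I1 would then absorb every edge of I2. *)
Lemma delta_D1UD2_gt : ~~ (Lverts G s \subset I1 :|: I2) -> l.+1 < #|delta G (D1 :|: D2)|.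
Proof.
case/subsetPn=> f fL; rewrite inE negb_or => /andP[fI1 fI2].
have fD1 : other s (edge f) \notin D1.
  by apply: contra fI1; apply: maximal_independent_absorbs maxI1 dangD1 I1_D1 fL.
have fD2 : other s (edge f) \notin D2.
  by apply: contra fI2; apply: maximal_independent_absorbs maxI2 dangD2 I2_D2 fL.
have [e eI1 _] := maximal_independent_private maxI1 maxI2 neq_I12 dangD2 I2_D2.
have neq_I21 : I2 != I1 by rewrite eq_sym.
have [g gI2 gD1] := maximal_independent_private maxI2 maxI1 neq_I21 dangD1 I1_D1.
rewrite ltnNge; apply/negP => small_cut.
have dangU : dangerous G s A l (D1 :|: D2).
  case: dangD1 => sD1 _ _ _; case: dangD2 => sD2 _ _ _; split => //.
  - by rewrite inE negb_or sD1 sD2.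
  - by apply/existsP; exists (other s (edge e)); rewrite inE I1_D1 ?other_in_A ?(subsetP maxI1.1.1).
  apply/existsP; exists (other s (edge f)); rewrite inE negb_or fD1 fD2 other_in_A //=.
  by rewrite andbT; apply: contraNneq sA => <-; apply: other_in_A.
have I1_U : ends_in I1 (D1 :|: D2) by move=> i /I1_D1; rewrite inE => ->.
have gU : other s (edge g) \in D1 :|: D2 by rewrite inE I2_D2 ?orbT.
have := maximal_independent_absorbs maxI1 dangU I1_U (subsetP maxI2.1.1 g gI2) gU.
by move/I1_D1; apply/negP.
Qed.

Lemma odd_l : #|I1 :&: I2| = 1 -> I1 :|: I2 != Lverts G s -> odd l.
Proof.
move=> card_I12 neq_L.
have cutI : l <= #|delta G (D1 :&: D2)| by apply: l_le_delta_D1ID2; rewrite card_I12.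
have cutU : l.+1 < #|delta G (D1 :|: D2)|.
  apply: delta_D1UD2_gt; apply: contra neq_L => sub.
  by rewrite eqEsubset sub subUset maxI1.1.1 maxI2.1.1.
suff -> : l = (n_between G (D1 :&: D2) (D1 :\: D2)).*2.+1 by rewrite /= odd_double.
have [_ _ _ cut1] := dangD1; have [_ _ _ cut2] := dangD2.
have := card_I1I2_le_between; rewrite card_I12.
have := card_delta_posimodular G D1 D2; have := card_delta_submodular G D1 D2.
have := card_delta_split G D1 D2; have := l_le_delta_D1D2; have := l_le_delta_D2D1.
lia.
Qed.

End TwoMaximalIndependentSets.

End LiftingGraph.

Theorem proposition4p6 (V : finType) (G : seq (V * V)) (l : nat) (s : V)
    (A : {set V}) (I1 I2 : {set 'I_(size G)}) (D1 D2 : {set V}) :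
  loopless G ->
  4 <= l ->
  A \proper [set: V] ->
  s \notin A ->
  (forall x y, x \in A -> y \in A -> x != y -> lambda_ge G x y l) ->
  (forall i : 'I_(size G), ((edge i).1 \in A) || ((edge i).2 \in A)) ->
  4 <= deg G s ->
  maximal_independent_L s A l I1 -> maximal_independent_L s A l I2 ->
  I1 != I2 -> 2 <= #|I1| -> 2 <= #|I2| ->
  dangerous G s A l D1 -> dangerous G s A l D2 ->
  (forall i, i \in I1 -> other s (edge i) \in D1) ->
  (forall i, i \in I2 -> other s (edge i) \in D2) ->
  #|I1 :&: I2| <= 1 /\
  (#|I1 :&: I2| = 1 -> I1 :|: I2 != Lverts G s -> odd l).
Proof.
move=> _ _ _ sA lambda_A edges_meet_A _ maxI1 maxI2 neq_I12 _ _ dangD1 dangD2 I1_D1 I2_D2.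
split.
  exact: (card_I1I2_le1 sA lambda_A edges_meet_A maxI1 maxI2 neq_I12 dangD1 dangD2 I1_D1 I2_D2).
exact: (odd_l sA lambda_A edges_meet_A maxI1 maxI2 neq_I12 dangD1 dangD2 I1_D1 I2_D2).
Qed.
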